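(* Let $(A,S,P)$ be a $\mathbb P$-contraction on $\mathbb C^2$ which is doubly commuting (i.e. each of $A,S,P$ commutes with the adjoints of the other two), such that its Taylor joint spectrum $\sigma_T(A,S,P)$ is contained in $b\mathbb P$ and $A^*A+\frac14S^*S\le I$. Then $(A,S,P)$ is a $\mathbb P$-unitary.
   Context: The pentablock is $\mathbb P=\{(a_{21},\operatorname{tr}A_0,\det A_0): A_0=[a_{ij}]\in M_2(\mathbb C),\ \|A_0\|<1\}$; a $\mathbb P$-contraction is a commuting triple whose Taylor joint spectrum lies in $\overline{\mathbb P}$ and satisfying $\|f(A,S,P)\|\le\sup_{\overline{\mathbb P}}|f|$ for all rational $f$ with no poles in $\overline{\mathbb P}$. With $b\Gamma=\{(z_1+z_2,z_1z_2):|z_1|=|z_2|=1\}$, the distinguished boundary is $b\mathbb P=\{(a,s,p):(s,p)\in b\Gamma,\ |a|^2+\frac14|s|^2=1\}$. A $\mathbb P$-unitary is a commuting triple of normal operators with Taylor joint spectrum in $b\mathbb P$. *)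

From HB Require Import structures.
From mathcomp Require Import all_boot all_order all_algebra.
From mathcomp Require Import complex.
From mathcomp Require Import reals.
Set Implicit Arguments. Unset Strict Implicit. Unset Printing Implicit Defensive.
Import Order.TTheory GRing.Theory Num.Theory.
Local Open Scope ring_scope.

Section Pentablock.
Variable R : realType.
Local Notation C := R[i].
Local Notation mx := 'M[C]_2.
Local Notation vec := 'cV[C]_2.

Definition adjmx (m n : nat) (X : 'M[C]_(m, n)) : 'M[C]_(n, m) :=
  (map_mx Num.conj_op X)^T.

Definition vnorm2 (v : vec) : C := \sum_(i < 2) `|v i 0| ^+ 2.

Definition opnorm_le (X : mx) (M : C) : Prop :=
  0 <= M /\ forall v : vec, vnorm2 (X *m v) <= M ^+ 2 * vnorm2 v.

(* ||X|| < 1 : the operator norm, i.e. the supremum of ||X v|| over unit v,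
   is < 1 (on C^2 the supremum is attained, so this is: some bound r < 1). *)
Definition opnorm_lt1 (X : mx) : Prop := exists r : C, r < 1 /\ opnorm_le X r.

Definition psd (X : mx) : Prop := forall v : vec, 0 <= (adjmx v *m X *m v) 0 0.

Definition pt := (C * C * C)%type.

Definition pentablock : pt -> Prop := fun z =>
  exists A0 : mx, opnorm_lt1 A0 /\
    z = (A0 1 0, \tr A0, \det A0).

Definition pentablock_cl : pt -> Prop := fun z =>
  forall eps : C, 0 < eps -> exists w, pentablock w /\
    `|z.1.1 - w.1.1| < eps /\ `|z.1.2 - w.1.2| < eps /\ `|z.2 - w.2| < eps.

Definition bGamma (s p : C) : Prop :=
  exists z1 z2 : C, `|z1| = 1 /\ `|z2| = 1 /\ s = z1 + z2 /\ p = z1 * z2.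

Definition bP : pt -> Prop := fun z =>
  bGamma z.1.2 z.2 /\ `|z.1.1| ^+ 2 + 4^-1 * `|z.1.2| ^+ 2 = 1.

(* Exactness of the Koszul complex
   0 -> H -> H^3 -> H^3 -> H -> 0   (H = C^2) of a commuting triple
   d0 x = (T1 x, T2 x, T3 x)
   d1 (x1,x2,x3) = (T2 x3 - T3 x2, T3 x1 - T1 x3, T1 x2 - T2 x1)
   d2 (y1,y2,y3) = T1 y1 + T2 y2 + T3 y3. *)
Definition koszul_exact (T1 T2 T3 : mx) : Prop :=
  (forall x : vec, T1 *m x = 0 -> T2 *m x = 0 -> T3 *m x = 0 -> x = 0) /\
  (forall x1 x2 x3 : vec,
      T2 *m x3 - T3 *m x2 = 0 -> T3 *m x1 - T1 *m x3 = 0 ->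
      T1 *m x2 - T2 *m x1 = 0 ->
      exists x : vec, x1 = T1 *m x /\ x2 = T2 *m x /\ x3 = T3 *m x) /\
  (forall y1 y2 y3 : vec, T1 *m y1 + T2 *m y2 + T3 *m y3 = 0 ->
      exists x1 x2 x3 : vec,
        y1 = T2 *m x3 - T3 *m x2 /\ y2 = T3 *m x1 - T1 *m x3 /\
        y3 = T1 *m x2 - T2 *m x1) /\
  (forall z : vec, exists y1 y2 y3 : vec, z = T1 *m y1 + T2 *m y2 + T3 *m y3).

Definition taylor_spectrum (A S P : mx) : pt -> Prop := fun z =>
  ~ koszul_exact (A - z.1.1%:M) (S - z.1.2%:M) (P - z.2%:M).

Definition commuting (A S P : mx) : Prop :=
  A * S = S * A /\ A * P = P * A /\ S * P = P * S.

Definition poly3 (N : nat) := 'I_N -> 'I_N -> 'I_N -> C.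

Definition peval (N : nat) (c : poly3 N) (z : pt) : C :=
  \sum_(i < N) \sum_(j < N) \sum_(k < N)
     c i j k * z.1.1 ^+ i * z.1.2 ^+ j * z.2 ^+ k.

Definition pevalmx (N : nat) (c : poly3 N) (A S P : mx) : mx :=
  \sum_(i < N) \sum_(j < N) \sum_(k < N)
     c i j k *: (A ^+ i * S ^+ j * P ^+ k).

(* The inequality "||X|| <= sup |f|"
   is written as: every upper bound M of |f| on the closed pentablock
   bounds ||X||. *)
Definition P_contraction (A S P : mx) : Prop :=
  commuting A S P /\
  (forall z, taylor_spectrum A S P z -> pentablock_cl z) /\
  (forall (N : nat) (p q : poly3 N),
     (forall z, pentablock_cl z -> peval q z != 0) ->
     forall M : C, 0 <= M ->
     (forall z, pentablock_cl z -> `|peval p z / peval q z| <= M) ->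
     opnorm_le (pevalmx p A S P * invmx (pevalmx q A S P)) M).

Definition doubly_commuting (A S P : mx) : Prop :=
  commuting A S P /\
  A * adjmx S = adjmx S * A /\ A * adjmx P = adjmx P * A /\
  S * adjmx A = adjmx A * S /\ S * adjmx P = adjmx P * S /\
  P * adjmx A = adjmx A * P /\ P * adjmx S = adjmx S * P.

Definition normalmx (X : mx) : Prop := X * adjmx X = adjmx X * X.

Definition P_unitary (A S P : mx) : Prop :=
  commuting A S P /\ normalmx A /\ normalmx S /\ normalmx P /\
  (forall z, taylor_spectrum A S P z -> bP z).

End Pentablock.

(* Simultaneously triangularize the commuting triple by a unitary U, so that
   U A U^*, U S U^*, U P U^* are lower triangular.  The first row of U is then
   a common left eigenvector of A, S, P with eigenvalues the (0,0) entries
   (a, s, p); hence (a, s, p) lies in the Taylor spectrum, so in bP, giving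
   |a|^2 + |s|^2/4 = 1 and |p| = 1.  Evaluating A^*A + S^*S/4 <= I and
   ||P|| <= 1 at the unit vector U^* e_0 bounds the squared norms of the first
   columns of the triangular forms by 1, which forces their off-diagonal
   entries to vanish.  The triangular forms are therefore diagonal, and
   A, S, P are normal.  The bound ||P|| <= 1 is the P-contraction inequality
   for f(a, s, p) = p, which is at most 1 on the closed pentablock because
   |det A0| <= 1 whenever ||A0|| < 1. *)
From Pilot Require Import Defs.
From HB Require Import structures.
From mathcomp Require Import all_boot all_order all_algebra.
From mathcomp Require Import complex reals.
Set Implicit Arguments. Unset Strict Implicit. Unset Printing Implicit Defensive.
Import Order.TTheory GRing.Theory Num.Theory.
Local Open Scope ring_scope.

(* The second index of 'I_2, written as [big_ord_recl] produces it: the ring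
   element [1 : 'I_2] has the same value but is not convertible to it. *)
Local Notation i1 := (lift ord0 (ord0 : 'I_1)).

Lemma ord2P (i : 'I_2) : i = 0 \/ i = i1.
Proof. by case: i => [[|[|//]]] Hi; [left|right]; apply/val_inj. Qed.

Lemma sum_ord2 (V : nmodType) (F : 'I_2 -> V) : \sum_(i < 2) F i = F 0 + F i1.
Proof. by rewrite big_ord_recl big_ord1. Qed.

Lemma trig_row0 (K : pzRingType) n (T : 'M[K]_n.+1) :
  is_trig_mx T -> row 0 T = T 0 0 *: delta_mx 0 0.
Proof.
move=> /is_trig_mxP T_trig; apply/matrixP => i j; rewrite !mxE ord1 eqxx /=.
by case: (unliftP 0 j) => [j' ->|->]; rewrite ?eqxx ?mulr1 // T_trig ?mulr0.
Qed.

Lemma trig_mx2_diag (K : pzRingType) (T : 'M[K]_2) :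
  is_trig_mx T -> T i1 0 = 0 -> is_diag_mx T.
Proof.
move=> /is_trig_mxP T_trig T10; apply/is_diag_mxP => i j.
by case: (ord2P i) (ord2P j) => -> [] -> //= _; rewrite T_trig.
Qed.

Lemma det_mx2 (K : comPzRingType) (X : 'M[K]_2) :
  \det X = X 0 0 * X i1 i1 - X 0 i1 * X i1 0.
Proof.
rewrite (expand_det_row X ord0) sum_ord2 /cofactor !det_mx11 !mxE /=.
have -> : lift ord0 (0 : 'I_1) = i1 by apply/val_inj.
have -> : lift i1 (0 : 'I_1) = ord0 by apply/val_inj.
by rewrite expr0 mul1r expr1 mulN1r mulrN.
Qed.

Lemma sum3_only1 {V : nmodType} {N} {F : 'I_N -> 'I_N -> 'I_N -> V}
    (i0 j0 k0 : 'I_N) :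
  (forall i j k, ~~ [&& i == i0, j == j0 & k == k0] -> F i j k = 0) ->
  \sum_(i < N) \sum_(j < N) \sum_(k < N) F i j k = F i0 j0 k0.
Proof.
move=> F0; rewrite (big_only1 i0) // => [|i /negPf i_ne _]; last first.
  by rewrite big1 // => j _; rewrite big1 // => k _; rewrite F0 ?i_ne.
rewrite (big_only1 j0) // => [|j /negPf j_ne _]; last first.
  by rewrite big1 // => k _; rewrite F0 ?eqxx ?j_ne.
by rewrite (big_only1 k0) // => k /negPf k_ne _; rewrite F0 ?eqxx ?k_ne.
Qed.

Section PentablockC2.
Variable R : realType.
Local Notation C := R[i].
Local Notation mx := 'M[C]_2.
Local Notation vec := 'cV[C]_2.

Lemma adjmxE m n (X : 'M[C]_(m, n)) : adjmx X = (X ^t* )%sesqui.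
Proof. by apply/matrixP => i j; rewrite !mxE. Qed.

Lemma adjmxM m n p (X : 'M[C]_(m, n)) (Y : 'M[C]_(n, p)) :
  adjmx (X *m Y) = adjmx Y *m adjmx X.
Proof. by rewrite !adjmxE trmx_mul map_mxM. Qed.

Lemma adjmx_unitary n (U : 'M[C]_n) : U \is unitarymx -> adjmx U \is unitarymx.
Proof. by rewrite adjmxE trmxC_unitary. Qed.

Lemma unitary_adj_mulmx n (U : 'M[C]_n) : U \is unitarymx -> adjmx U *m U = 1%:M.
Proof. by move=> Uu; rewrite adjmxE -[_ *m U]mul1mx mulmxA mulmxKtV. Qed.

Lemma vnorm2E (v : vec) : vnorm2 v = (adjmx v *m v) 0 0.
Proof. by rewrite mxE; apply: eq_bigr => k _; rewrite !mxE normCKC. Qed.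

Lemma vnorm2_unitary (U : mx) (v : vec) :
  U \is unitarymx -> vnorm2 (U *m v) = vnorm2 v.
Proof.
move=> Uu; rewrite !vnorm2E adjmxM mulmxA -(mulmxA _ _ U).
by rewrite (unitary_adj_mulmx Uu) mulmx1.
Qed.

Lemma vnorm2_col (X : mx) j :
  vnorm2 (X *m delta_mx j 0) = `|X 0 j| ^+ 2 + `|X i1 j| ^+ 2.
Proof. by rewrite -colE /vnorm2 sum_ord2 !mxE. Qed.

Lemma vnorm2_delta j : vnorm2 (delta_mx j 0 : vec) = 1.
Proof.
rewrite -[delta_mx j 0]mul1mx vnorm2_col !mxE.
case: (ord2P j) => ->; rewrite ?eqxx /= normr1 normr0 expr1n expr0n.
  by rewrite addr0.
by rewrite add0r.
Qed.

Lemma sqr_norm_le0 (x : C) : `|x| ^+ 2 <= 0 -> x = 0.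
Proof.
by move=> x_le0; apply/eqP; rewrite -normr_eq0 -sqrf_eq0 eq_le x_le0 exprn_ge0.
Qed.

Lemma det_norm_le1 (X : mx) : opnorm_lt1 X -> `|\det X| <= 1.
Proof.
case=> r [r_lt1 [r_ge0 Xr]].
have r2_le1 : r ^+ 2 <= 1 by rewrite expr_le1 // ltW.
have col_le1 j : `|X 0 j| ^+ 2 + `|X i1 j| ^+ 2 <= 1.
  by rewrite -vnorm2_col (le_trans (Xr _)) // vnorm2_delta mulr1.
have amgm (x y : C) : `|x * y| *+ 2 <= `|x| ^+ 2 + `|y| ^+ 2.
  by rewrite normrM; apply: real_leif_mean_square_scaled; exact: normr_real.
rewrite det_mx2 (le_trans (ler_normB _ _)) // -(ler_pMn2r (_ : 0 < 2)%N) //.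
rewrite mulrnDl [X 0 i1 * _]mulrC (le_trans (lerD (amgm _ _) (amgm _ _))) //.
by rewrite addrACA [X in _ + X]addrC mulr2n lerD.
Qed.

Lemma pentablock_cl_norm_le1 (z : pt R) : pentablock_cl z -> `|z.2| <= 1.
Proof.
move=> zcl; apply/ler_addgt0Pr => e e_gt0.
have [_ [[A0 [A0_lt1 ->]] [_ [_ /= close]]]] := zcl e e_gt0.
rewrite -(subrK (\det A0) z.2) addrC (le_trans (ler_normD _ _)) //.
by rewrite lerD ?det_norm_le1 ?ltW.
Qed.

Definition monomial3 {N} (i0 j0 k0 : 'I_N) : poly3 R N :=
  fun i j k => ((i == i0) && (j == j0) && (k == k0))%:R.

Lemma peval_monomial3 N (i0 j0 k0 : 'I_N) (z : pt R) :
  peval (monomial3 i0 j0 k0) z = z.1.1 ^+ i0 * z.1.2 ^+ j0 * z.2 ^+ k0.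
Proof.
rewrite /peval (sum3_only1 (i0 := i0) (j0 := j0) (k0 := k0)) /monomial3.
  by rewrite !eqxx mul1r.
by move=> i j k; rewrite -andbA => /negPf ->; rewrite !mul0r.
Qed.

Lemma pevalmx_monomial3 N (i0 j0 k0 : 'I_N) (A S P : mx) :
  pevalmx (monomial3 i0 j0 k0) A S P = A ^+ i0 * S ^+ j0 * P ^+ k0.
Proof.
rewrite /pevalmx (sum3_only1 (i0 := i0) (j0 := j0) (k0 := k0)) /monomial3.
  by rewrite !eqxx scale1r.
by move=> i j k; rewrite -andbA => /negPf ->; rewrite scale0r.
Qed.

Lemma P_contraction_opnorm_le1 (A S P : mx) :
  P_contraction A S P -> opnorm_le P 1.
Proof.
case=> _ [_ vN].
have := vN 2%N (monomial3 ord0 ord0 i1) (monomial3 ord0 ord0 ord0) _ 1 ler01.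
rewrite !pevalmx_monomial3 /= !expr0 expr1 !mul1r invmx1 mulr1; apply.
  by move=> z _; rewrite peval_monomial3 /= !expr0 !mul1r oner_neq0.
move=> z zcl; rewrite !peval_monomial3 /= !expr0 expr1 !mul1r divr1.
exact: pentablock_cl_norm_le1.
Qed.

Lemma taylor_spectrum_left_eigen (A S P : mx) (r : 'rV[C]_2) a s p :
  r != 0 -> r *m A = a *: r -> r *m S = s *: r -> r *m P = p *: r ->
  taylor_spectrum A S P (a, s, p).
Proof.
move=> /eqP r_neq0 rA rS rP [_ [_ [_ onto]]]; apply: r_neq0.
have r_ann X x : r *m X = x *: r -> r *m (X - x%:M) = 0.
  by move=> rX; rewrite mulmxBr rX mul_mx_scalar subrr.
have r_z (z : vec) : r *m z = 0.
  have [y1 [y2 [y3 ->]]] := onto z.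
  by rewrite !mulmxDr !mulmxA !r_ann // !mul0mx !addr0.
apply/matrixP => i j.
have := congr1 (fun M : 'M[C]_1 => M 0 0) (r_z (delta_mx j 0)).
by rewrite -colE !mxE ord1.
Qed.

Lemma bP_norms (a s p : C) :
  bP (a, s, p) -> `|a| ^+ 2 + 4^-1 * `|s| ^+ 2 = 1 /\ `|p| = 1.
Proof.
by case=> [[z1 [z2 [z1_1 [z2_1 [_ /= ->]]]]] ?]; rewrite normrM z1_1 z2_1 mulr1.
Qed.

Lemma psd_normsq_le (A S : mx) :
  psd (1 - (adjmx A *m A + 4^-1 *: (adjmx S *m S))) ->
  forall w, vnorm2 (A *m w) + 4^-1 * vnorm2 (S *m w) <= vnorm2 w.
Proof.
move=> psdM w; rewrite -subr_ge0; move: (psdM w).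
rewrite mulmxBr mulmxDr mulmxBl mulmxDl mulmx1 -scalemxAr -scalemxAl !mulmxA.
rewrite !vnorm2E !adjmxM !mulmxA.
set a := adjmx w *m w; set b := _ *m adjmx A *m A *m w.
set c := _ *m adjmx S *m S *m w.
by rewrite !mxE.
Qed.

Lemma norm_excess_eq0 (a s x y : C) : `|a| ^+ 2 + 4^-1 * `|s| ^+ 2 = 1 ->
  `|a| ^+ 2 + `|x| ^+ 2 + 4^-1 * (`|s| ^+ 2 + `|y| ^+ 2) <= 1 -> x = 0 /\ y = 0.
Proof.
move=> as1; rewrite -[X in _ <= X]as1 mulrDr addrACA gerDl => excess_le0.
have y_ge0 : 0 <= 4^-1 * `|y| ^+ 2.
  by rewrite mulr_ge0 ?invr_ge0 ?ler0n ?exprn_ge0.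
have x_le0 : `|x| ^+ 2 <= 0 by rewrite (le_trans _ excess_le0) ?lerDl.
split; first exact: sqr_norm_le0.
apply: sqr_norm_le0; rewrite -(@pmulr_rle0 _ 4^-1) ?invr_gt0 ?ltr0n //.
by rewrite (le_trans _ excess_le0) ?lerDr ?exprn_ge0.
Qed.

Section UnitaryConjugation.
Variables (n : nat) (U : 'M[C]_n.+1).
Hypothesis U_unitary : U \is unitarymx.

Lemma conjmx_unitary X : conjmx U X = U *m X *m adjmx U.
Proof. by rewrite (conjymx _ U_unitary) adjmxE. Qed.

Lemma unitary_row0_neq0 : row 0 U != 0.
Proof.
apply/eqP => U0; have := mulmxtVK (delta_mx 0 0 : 'rV[C]_n.+1) U_unitary.
rewrite -rowE U0 mul0mx => /matrixP /(_ 0 0); rewrite !mxE eqxx => /esym/eqP.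
by rewrite oner_eq0.
Qed.

Lemma unitary_trig_left_eigen X : is_trig_mx (conjmx U X) ->
  row 0 U *m X = conjmx U X 0 0 *: row 0 U.
Proof.
rewrite conjmx_unitary => /trig_row0 T0.
rewrite -row_mul {1}(_ : U *m X = U *m X *m adjmx U *m U).
  by rewrite row_mul T0 -scalemxAl -rowE.
by rewrite -mulmxA (unitary_adj_mulmx U_unitary) mulmx1.
Qed.
End UnitaryConjugation.

Lemma vnorm2_conjmx_col (U X : mx) j : U \is unitarymx ->
  vnorm2 (X *m (adjmx U *m delta_mx j 0))
  = `|conjmx U X 0 j| ^+ 2 + `|conjmx U X i1 j| ^+ 2.
Proof.
move=> Uu; rewrite -(vnorm2_unitary _ Uu) -vnorm2_col (conjmx_unitary Uu).
by rewrite !mulmxA.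
Qed.

Lemma vnorm2_adjmx_delta (U : mx) j : U \is unitarymx ->
  vnorm2 (adjmx U *m delta_mx j 0) = 1.
Proof.
by move=> Uu; rewrite (vnorm2_unitary _ (adjmx_unitary Uu)) vnorm2_delta.
Qed.

Lemma unitary_diag_normal (U X : mx) : U \is unitarymx ->
  is_diag_mx (conjmx U X) -> Defs.normalmx X.
Proof.
move=> Uu /diag_mxP [d Td]; rewrite /Defs.normalmx -mulmxE adjmxE.
apply/normalmxP/orthomx_spectral_subproof; exists (U, d) => //=.
rewrite (invmx_unitary Uu) -Td (conjmx_unitary Uu) -!adjmxE !mulmxA.
by rewrite (unitary_adj_mulmx Uu) mul1mx -mulmxA (unitary_adj_mulmx Uu) mulmx1.
Qed.
End PentablockC2.

Theorem mainTheorem18 (R : realType) (A S P : 'M[R[i]]_2) :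
  P_contraction A S P ->
  doubly_commuting A S P ->
  (forall z, taylor_spectrum A S P z -> bP z) ->
  psd (1 - (adjmx A *m A + 4^-1 *: (adjmx S *m S))) ->
  P_unitary A S P.
Proof.
(* On C^2 simultaneous unitary triangularization makes double commutativity
   superfluous. *)
move=> Pc _ spec_bP psdM; have [[cAS [cAP cSP]] _] := Pc.
have comm : {in [:: A; S; P] &, forall X Y, comm_mx X Y}.
  move=> X Y; rewrite !inE => /or3P[] /eqP-> /or3P[] /eqP->;
  by rewrite /comm_mx -?mulmxE.
have [U Uu /allP trig] := cotrigonalization comm.
have tA : is_trig_mx (conjmx U A) := trig A (mem_head _ _).
have tS : is_trig_mx (conjmx U S) by apply: trig; rewrite !inE eqxx orbT.
have tP : is_trig_mx (conjmx U P) by apply: trig; rewrite !inE eqxx !orbT.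
have [ASnorm Pnorm] := bP_norms (spec_bP _ (taylor_spectrum_left_eigen
  (unitary_row0_neq0 Uu) (unitary_trig_left_eigen Uu tA)
  (unitary_trig_left_eigen Uu tS) (unitary_trig_left_eigen Uu tP))).
have [A10 S10] : conjmx U A i1 0 = 0 /\ conjmx U S i1 0 = 0.
  apply: norm_excess_eq0 ASnorm _.
  have := psd_normsq_le psdM (adjmx U *m delta_mx 0 0).
  by rewrite !(vnorm2_conjmx_col _ _ Uu) (vnorm2_adjmx_delta _ Uu).
have P10 : conjmx U P i1 0 = 0.
  have [_ /(_ (adjmx U *m delta_mx 0 0))] := P_contraction_opnorm_le1 Pc.
  rewrite (vnorm2_conjmx_col _ _ Uu) (vnorm2_adjmx_delta _ Uu) Pnorm !expr1n.
  by rewrite mulr1 gerDl => /sqr_norm_le0.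
have normal X :
    is_trig_mx (conjmx U X) -> conjmx U X i1 0 = 0 -> Defs.normalmx X.
  by move=> ? ?; apply: (unitary_diag_normal Uu); apply: trig_mx2_diag.
split; first exact: Pc.1.
by split; [|split; [|split]]; [exact: normal tA A10 | exact: normal tS S10
                              | exact: normal tP P10 | exact: spec_bP].
Qed.
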